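(* Fix $x\in[0,1]$. The evaluation operator $E:\mathcal C^0([0,1])\to\mathbb R$, $E(\eta)=\varphi_\eta(x)$, is differentiable, with derivative $$\frac{\partial\varphi(x)}{\partial\eta}(\Delta\eta)=\left(\frac{\int_0^x\left[\int_0^s\Delta\eta\right]e^{\int_0^s\eta}ds}{\int_0^xe^{\int_0^s\eta}ds}-\frac{\int_0^1\left[\int_0^s\Delta\eta\right]e^{\int_0^s\eta}ds}{\int_0^1e^{\int_0^s\eta}ds}\right)\varphi(x),$$ where $\varphi=\varphi_\eta$. Moreover there exists $\varepsilon_0>0$ such that for all $\varepsilon\in(0,\varepsilon_0)$, if $\|D^2\varphi\|_{\mathcal C^0}<\varepsilon$ then $$\tfrac18\min\{\varphi(x),1-\varphi(x)\}\le\left|\frac{\partial\varphi(x)}{\partial\eta}\right|\le2\min\{\varphi(x),1-\varphi(x)\}.$$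
   Context: For $\eta\in\mathcal C^0([0,1])$, $\varphi_\eta(x)=\dfrac{\int_0^xe^{\int_0^s\eta(t)dt}ds}{\int_0^1e^{\int_0^s\eta(t)dt}ds}$ is the unique orientation-preserving diffeomorphism of $[0,1]$ with nonlinearity $N\varphi_\eta=D^2\varphi_\eta/D\varphi_\eta=\eta$; this identifies $\mathrm{Diff}^2_+([0,1])$ with $\mathcal C^0([0,1])$. $\left|\partial\varphi(x)/\partial\eta\right|$ denotes the operator norm of the derivative as a linear functional on $\mathcal C^0([0,1])$. *)

From HB Require Import structures.
From mathcomp Require Import all_boot all_order all_algebra.
From mathcomp Require Import all_classical all_reals all_analysis.
Set Implicit Arguments. Unset Strict Implicit. Unset Printing Implicit Defensive.
Import Order.TTheory GRing.Theory Num.Theory.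
Import numFieldNormedType.Exports.
Local Open Scope classical_set_scope.
Local Open Scope ring_scope.

Section Defs.
Variable R : realType.
Implicit Types (f eta Deta : R -> R) (a b x : R).

(* elements of C^0([0,1]) are represented by functions R -> R continuous on
   [0,1]; only their values on [0,1] matter below *)
Definition cont01 f : Prop := {within `[0 : R, 1], continuous f}.

Definition supnorm01 f : R := sup [set `|f t| | t in `[0 : R, 1]].

Definition integ a b f : R := \int[lebesgue_measure]_(s in `[a, b]) f s.

Definition expint eta (s : R) : R := expR (integ 0 s eta).

Definition phi eta x : R := integ 0 x (expint eta) / integ 0 1 (expint eta).

(* the claimed derivative (d varphi(x) / d eta)(Deta); note x/0 = 0 in
   MathComp, so at x = 0 this is 0 = the true derivative *)
Definition dphi eta x Deta : R :=
  (integ 0 x (fun s => integ 0 s Deta * expint eta s) / integ 0 x (expint eta)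
   - integ 0 1 (fun s => integ 0 s Deta * expint eta s) / integ 0 1 (expint eta))
  * phi eta x.

Definition opnorm01 (L : (R -> R) -> R) : R :=
  sup [set `|L D| | D in [set D | cont01 D /\ supnorm01 D <= 1]].

(* || D^2 varphi ||_{C^0}: sup of |varphi''| over ]0,1[ (equal to the sup
   over [0,1] by continuity of varphi'' on [0,1]) *)
Definition D2norm01 (g : R -> R) : R :=
  sup [set `|(derive1 (derive1 g)) t| | t in `]0 : R, 1[].

End Defs.

From HB Require Import structures.
From mathcomp Require Import all_boot all_order all_algebra.
From mathcomp Require Import all_classical all_reals all_analysis.
From mathcomp Require Import ring lra.
Import Order.TTheory GRing.Theory Num.Theory.
Import numFieldNormedType.Exports.
Set Implicit Arguments. Unset Strict Implicit. Unset Printing Implicit Defensive.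
Local Open Scope classical_set_scope.
Local Open Scope ring_scope.

(* Write g(s) = e^{∫_0^s η} and Z(y) = ∫_0^y g, so that φ_η(x) = Z(x)/Z(1).  Replacing η by
   η + Δ multiplies g(s) by e^{∫_0^s Δ} = 1 + ∫_0^s Δ + O(‖Δ‖²), so Z(y) changes by
   dZ Δ y + O(‖Δ‖² Z(y)) with |dZ Δ y| ≤ ‖Δ‖ Z(y); linearizing the quotient Z(x)/Z(1) gives
   the derivative with a remainder O(‖Δ‖²).

   The derivative is a(1 - φ) - φ b with |a| ≤ ‖Δ‖ φ and |b| ≤ ‖Δ‖ (1 - φ), hence the upper
   bound 2 min(φ, 1 - φ) for every η.  Since φ'' = g η / Z(1), a small ‖D²φ‖ keeps g within
   a factor 1 ± 2ε of Z(1) (mean value theorem), so φ is close to the identity; then Δ = 1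
   gives a derivative of size about x(1 - x)/2, which is at least min(φ, 1 - φ)/8. *)

Section Integral01.
Variable R : realType.
Implicit Types (f h D : R -> R) (c d y : R).

Lemma cont01_subitv f y : cont01 f -> 0 <= y -> y <= 1 ->
  {within `[0, y], continuous f}.
Proof.
move=> cf y0 y1; apply: continuous_subspaceW cf.
by apply: subset_itvScc; rewrite bnd_simp.
Qed.

Lemma cont01_integrable f y : cont01 f -> 0 <= y -> y <= 1 ->
  lebesgue_measure.-integrable `[0, y] (EFin \o f).
Proof.
move=> cf y0 y1; apply: continuous_compact_integrable; first exact: segment_compact.
exact: cont01_subitv.
Qed.

Lemma cont01_cst c : cont01 (fun _ => c).
Proof. by move=> t; apply: cst_continuous. Qed.

Lemma cont01_id : cont01 (fun t : R => t).
Proof. by apply: continuous_subspaceT => t; exact: cvg_id. Qed.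

Lemma cont01D f h : cont01 f -> cont01 h -> cont01 (fun t => f t + h t).
Proof. by move=> cf ch t; apply: continuousD; [exact: cf|exact: ch]. Qed.

Lemma cont01N f : cont01 f -> cont01 (fun t => - f t).
Proof. by move=> cf t; apply: continuousN; exact: cf. Qed.

Lemma cont01B f h : cont01 f -> cont01 h -> cont01 (fun t => f t - h t).
Proof. by move=> cf ch; apply: cont01D => //; exact: cont01N. Qed.

Lemma cont01M f h : cont01 f -> cont01 h -> cont01 (fun t => f t * h t).
Proof. by move=> cf ch t; apply: continuousM; [exact: cf|exact: ch]. Qed.

Lemma cont01Z c f : cont01 f -> cont01 (fun t => c * f t).
Proof. by apply: cont01M; exact: cont01_cst. Qed.

Lemma cont01_comp (k : R -> R) f : continuous k -> cont01 f -> cont01 (fun t => k (f t)).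
Proof. by move=> ck cf t; apply: continuous_comp; [exact: cf|exact: ck]. Qed.

Lemma cont01_norm f : cont01 f -> cont01 (fun t => `|f t|).
Proof. exact: cont01_comp (@norm_continuous _ R^o). Qed.

Lemma cont01_integ f : cont01 f -> cont01 (fun y => integ 0 y f).
Proof.
by move=> cf; apply: parameterized_integral_continuous ler01 _; exact: cont01_integrable.
Qed.

Section Linearity.
Variables (y : R) (f h : R -> R).
Hypotheses (cf : cont01 f) (ch : cont01 h) (y0 : 0 <= y) (y1 : y <= 1).

Lemma integD : integ 0 y (fun t => f t + h t) = integ 0 y f + integ 0 y h.
Proof. by rewrite /integ RintegralD//; exact: cont01_integrable. Qed.

Lemma integB : integ 0 y (fun t => f t - h t) = integ 0 y f - integ 0 y h.
Proof. by rewrite /integ RintegralB//; exact: cont01_integrable. Qed.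

Lemma integZ c : integ 0 y (fun t => c * f t) = c * integ 0 y f.
Proof. by rewrite /integ RintegralZl//; exact: cont01_integrable. Qed.

End Linearity.

Lemma le_integ y f h : cont01 f -> cont01 h -> 0 <= y -> y <= 1 ->
  (forall t, 0 <= t -> t <= y -> f t <= h t) -> integ 0 y f <= integ 0 y h.
Proof.
move=> cf ch y0 y1 fh; apply: le_Rintegral => //; try exact: cont01_integrable.
by move=> t; rewrite /= in_itv /= => /andP[]; exact: fh.
Qed.

Lemma norm_integ_le y f h : cont01 f -> cont01 h -> 0 <= y -> y <= 1 ->
  (forall t, 0 <= t -> t <= y -> `|f t| <= h t) -> `|integ 0 y f| <= integ 0 y h.
Proof.
move=> cf ch y0 y1 fh.
apply: le_trans (le_normr_Rintegral _ (cont01_integrable cf y0 y1)) _ => //.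
by apply: le_integ => //; exact: cont01_norm.
Qed.

Lemma eq_integ y f h : (forall t, 0 <= t -> t <= y -> f t = h t) ->
  integ 0 y f = integ 0 y h.
Proof.
by move=> fh; apply: eq_Rintegral => t; rewrite inE /= in_itv /= => /andP[]; exact: fh.
Qed.

Lemma integ_ge0 y f : (forall t, 0 <= t -> t <= y -> 0 <= f t) -> 0 <= integ 0 y f.
Proof.
by move=> f0; apply: Rintegral_ge0 => t; rewrite /= in_itv /= => /andP[]; exact: f0.
Qed.

Lemma integ_cst y c : 0 <= y -> integ 0 y (fun _ => c) = c * y.
Proof.
move=> y0; rewrite /integ Rintegral_cst//.
have := @lebesgue_measure_itv R `[0, y]; rewrite /= lte_fin => ->.
case: ltP => [y_gt0|]; first by rewrite /= subr0.
by move=> y_le0; have -> : y = 0 by apply/eqP; rewrite eq_le y_le0 y0.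
Qed.

Lemma integ_cst_norm_le y f c : cont01 f -> 0 <= y -> y <= 1 ->
  (forall t, 0 <= t -> t <= y -> `|f t| <= c) -> `|integ 0 y f| <= c * y.
Proof.
by move=> cf y0 y1 fc; rewrite -integ_cst//; apply: norm_integ_le => //; exact: cont01_cst.
Qed.

Lemma norm_integ_le_sup D d s : cont01 D ->
  (forall t, 0 <= t -> t <= 1 -> `|D t| <= d) -> 0 <= s -> s <= 1 -> `|integ 0 s D| <= d.
Proof.
move=> cD hD s0 s1; have d0 : 0 <= d := le_trans (normr_ge0 _) (hD 0 (lexx _) ler01).
have hDs t : 0 <= t -> t <= s -> `|D t| <= d by move=> t0 ts; apply: hD => //; exact: le_trans s1.
by apply: le_trans (integ_cst_norm_le cD s0 s1 hDs) _; rewrite ler_piMr.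
Qed.

Lemma integ_le_integ1 y f : cont01 f -> 0 <= y -> y <= 1 ->
  (forall t, 0 <= t -> t <= 1 -> 0 <= f t) -> integ 0 y f <= integ 0 1 f.
Proof.
move=> cf y0 y1 f0; rewrite -subr_ge0 /integ.
rewrite (@Rintegral_itvB R f (BLeft 0) (BRight 1) y) ?bnd_simp//; last first.
  exact: cont01_integrable.
apply: Rintegral_ge0 => t; rewrite /= in_itv /= => /andP[yt t1].
by apply: f0 => //; rewrite (le_trans y0)// ltW.
Qed.

Lemma integ_tail_le y f h : cont01 f -> cont01 h -> 0 <= y -> y <= 1 ->
  (forall t, 0 <= t -> t <= 1 -> f t <= h t) ->
  integ 0 1 f - integ 0 y f <= integ 0 1 h - integ 0 y h.
Proof.
move=> cf ch y0 y1 fh.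
have hf0 t : 0 <= t -> t <= 1 -> 0 <= h t - f t by move=> t0 t1; rewrite subr_ge0 fh.
by have := integ_le_integ1 (cont01B ch cf) y0 y1 hf0; rewrite !integB//; lra.
Qed.

Lemma integ_ge_cst y f c : cont01 f -> 0 <= y -> y <= 1 ->
  (forall t, 0 <= t -> t <= y -> c <= f t) -> c * y <= integ 0 y f.
Proof.
by move=> cf y0 y1 hf; rewrite -integ_cst//; apply: le_integ => //; exact: cont01_cst.
Qed.

Lemma integ_le_cst y f c : cont01 f -> 0 <= y -> y <= 1 ->
  (forall t, 0 <= t -> t <= y -> f t <= c) -> integ 0 y f <= c * y.
Proof.
by move=> cf y0 y1 hf; rewrite -integ_cst//; apply: le_integ => //; exact: cont01_cst.
Qed.

Lemma integ_tail_le_cst y f c : cont01 f -> 0 <= y -> y <= 1 ->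
  (forall t, 0 <= t -> t <= 1 -> f t <= c) -> integ 0 1 f - integ 0 y f <= c * (1 - y).
Proof.
move=> cf y0 y1 hf; have := integ_tail_le cf (@cont01_cst c) y0 y1 hf.
by rewrite !integ_cst ?ler01// mulrBr mulr1.
Qed.

End Integral01.

Arguments cont01_id {R}.

Section SupNorm01.
Variable R : realType.
Implicit Types (f : R -> R) (c : R).

Lemma cont01_bounded f : cont01 f -> exists M, forall t, 0 <= t -> t <= 1 -> `|f t| <= M.
Proof.
move=> cf; have [c c01 cmax] := EVT_max ler01 (cont01_norm cf).
by exists `|f c| => t t0 t1; apply: cmax; rewrite in_itv /= t0 t1.
Qed.

Lemma norm_le_supnorm01 f t : cont01 f -> 0 <= t -> t <= 1 -> `|f t| <= supnorm01 f.
Proof.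
move=> cf t0 t1; have [M fM] := cont01_bounded cf.
apply: ub_le_sup; last by exists t => //=; rewrite in_itv /= t0 t1.
by exists M => _ [s /= + <-]; rewrite in_itv /= => /andP[]; exact: fM.
Qed.

Lemma supnorm01_ge0 f : cont01 f -> 0 <= supnorm01 f.
Proof. by move=> cf; apply: le_trans (norm_le_supnorm01 cf (lexx 0) ler01). Qed.

Lemma supnorm01_cst_le c : supnorm01 (fun _ => c) <= `|c|.
Proof.
apply: ge_sup; first by exists `|c|, 0 => //=; rewrite in_itv /= lexx ler01.
by move=> _ [t _ <-].
Qed.

End SupNorm01.

Section FTC01.
Variable R : realType.
Implicit Types (f : R -> R) (y : R).

Lemma integ00 f : integ 0 0 f = 0.
Proof. by rewrite /integ set_itv1 Rintegral_set1. Qed.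

Lemma integ_id y : 0 <= y -> integ 0 y (fun s => s) = y ^+ 2 / 2.
Proof.
rewrite le_eqVlt => /predU1P[<-|y0]; first by rewrite integ00 expr0n /= mul0r.
pose F : R -> R := 2^-1 *: (@id R * @id R).
have dF (s : R) : is_derive s (1 : R) F s.
  apply: is_derive_eq (is_deriveZ _ (is_deriveM (is_derive_id _ _) (is_derive_id _ _))) _.
  by rewrite /= !scaler1 -[_ *: _]/(2^-1 * (s + s)); field.
have cF : continuous F.
  by move=> s; apply/differentiable_continuous/derivable1_diffP; case: (dF s).
rewrite /integ /Rintegral (@continuous_FTC2 R id F 0 y y0).
- have FE (z : R) : F z = 2^-1 * (z * z) by [].
  by rewrite !FE expr2 -EFinB /=; field.
- by apply: continuous_subspaceT => s; exact: cvg_id.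
- split; first by move=> s _; case: (dF s).
  + exact/cvg_at_right_filter/cF.
  + exact/cvg_at_left_filter/cF.
- by move=> s _; rewrite derive1E; case: (dF s).
Qed.

Lemma integ_id_mul_le y f c : cont01 f -> 0 <= y -> y <= 1 ->
  (forall t, 0 <= t -> t <= y -> f t <= c) -> integ 0 y (fun s => s * f s) <= c * (y ^+ 2 / 2).
Proof.
move=> cf y0 y1 hf; rewrite -integ_id// -(integZ cont01_id y0 y1).
apply: le_integ y0 y1 _ => [||t t0 ty]; [exact: cont01M cont01_id cf|exact: cont01Z cont01_id|].
by rewrite mulrC ler_wpM2r// hf.
Qed.

Lemma integ_id_mul_tail_ge y f c : cont01 f -> 0 <= y -> y <= 1 ->
  (forall t, 0 <= t -> t <= 1 -> c <= f t) ->
  c * ((1 - y ^+ 2) / 2) <= integ 0 1 (fun s => s * f s) - integ 0 y (fun s => s * f s).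
Proof.
move=> cf y0 y1 hf.
have -> : c * ((1 - y ^+ 2) / 2) = c * (1 ^+ 2 / 2) - c * (y ^+ 2 / 2) by ring.
rewrite -!integ_id ?ler01// -(integZ cont01_id y0 y1) -(integZ cont01_id ler01 (lexx 1)).
apply: integ_tail_le y0 y1 _ => [||t t0 t1].
- exact: cont01Z cont01_id.
- exact: cont01M cont01_id cf.
- by rewrite mulrC ler_wpM2l// hf.
Qed.

Lemma is_derive_integ f y : cont01 f -> 0 < y -> y < 1 ->
  is_derive y 1 (fun z => integ 0 z f) (f y).
Proof.
move=> cf y0 y1; have [cfy _ _] := (continuous_within_itvP f ltr01).1 cf.
have [] := @continuous_FTC1_closed R f 0 y 1 y1 (cont01_integrable cf ler01 (lexx _)) y0.
  by apply: cfy; rewrite in_itv /= y0 y1.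
by move=> df Df; apply: DeriveDef => //; rewrite -derive1E.
Qed.

End FTC01.

Section QuotientLinearization.
Variables (R : realFieldType) (Zx Z1 Ax A1 Rx R1 d : R).
Hypotheses (Zx_ge0 : 0 <= Zx) (Zx_le : Zx <= Z1) (Z1_gt0 : 0 < Z1).
Hypotheses (d_ge0 : 0 <= d) (d_le : d <= 1/4).
Hypotheses (hAx : `|Ax| <= d * Zx) (hA1 : `|A1| <= d * Z1).
Hypotheses (hRx : `|Rx| <= 2 * d^+2 * Zx) (hR1 : `|R1| <= 2 * d^+2 * Z1).

Let N := Z1 + A1 + R1.
Let num := Z1^+2 * Rx - Zx * Z1 * R1 - (Ax * Z1 - A1 * Zx) * (A1 + R1).

Lemma perturbed_total_ge : Z1 / 2 <= N.
Proof.
move: hA1 hR1 d_ge0 d_le; rewrite /N !ler_norml => /andP[A1_ge _] /andP[R1_ge _] d0 d14.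
have Z10 := Z1_gt0.
have d2_le : d^+2 <= d / 4 by rewrite expr2; nra.
have : d^+2 * Z1 <= d / 4 * Z1 by rewrite ler_pM2r.
nra.
Qed.

Lemma linearization_errorE :
  (Zx + Ax + Rx) / N - Zx / Z1 - (Ax / Zx - A1 / Z1) * (Zx / Z1) = num / (Z1^+2 * N).
Proof.
have N_neq0 : Z1 + A1 + R1 != 0.
  by apply: lt0r_neq0; apply: lt_le_trans perturbed_total_ge; rewrite divr_gt0.
have [Zx0|Zx_neq0] := eqVneq Zx 0; last first.
  by rewrite /num /N; field; rewrite Zx_neq0 N_neq0 gt_eqF.
move: hAx hRx; rewrite Zx0 !mulr0 !normr_le0 => /eqP Ax0 /eqP Rx0.
by rewrite /num /N Zx0 Ax0 Rx0 !(mul0r, mulr0, add0r, addr0, subr0, oppr0).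
Qed.

Lemma linearization_numerator_le : `|num| <= 7 * d^+2 * Z1^+3.
Proof.
have Z1_ge0 := ltW Z1_gt0.
have d2_ge0 : 0 <= d^+2 := sqr_ge0 d.
have n1 : `|Z1^+2 * Rx| <= 2 * d^+2 * Z1^+3.
  rewrite normrM ger0_norm ?sqr_ge0//; apply: le_trans (ler_wpM2l (sqr_ge0 Z1) hRx) _.
  have -> : 2 * d^+2 * Z1^+3 = Z1^+2 * (2 * d^+2 * Z1) by ring.
  by rewrite ler_wpM2l ?sqr_ge0// ler_wpM2l ?mulr_ge0.
have n2 : `|Zx * Z1 * R1| <= 2 * d^+2 * Z1^+3.
  rewrite normrM ger0_norm ?mulr_ge0//; apply: le_trans (ler_wpM2l _ hR1) _.
    exact: mulr_ge0.
  have -> : 2 * d^+2 * Z1^+3 = Z1 * Z1 * (2 * d^+2 * Z1) by ring.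
  by rewrite ler_wpM2r ?mulr_ge0// ler_wpM2r.
have n3 : `|Ax * Z1 - A1 * Zx| <= 2 * d * Z1^+2.
  apply: le_trans (ler_normB _ _) _.
  rewrite !normrM (ger0_norm Z1_ge0) (ger0_norm Zx_ge0).
  have : `|Ax| * Z1 <= d * Zx * Z1 by rewrite ler_wpM2r.
  have : `|A1| * Zx <= d * Z1 * Zx by rewrite ler_wpM2r.
  have : d * Zx * Z1 <= d * Z1 * Z1 by rewrite ler_wpM2r// ler_wpM2l.
  rewrite expr2; lra.
have n4 : `|A1 + R1| <= 3/2 * d * Z1.
  apply: le_trans (ler_normD _ _) _.
  move: hA1 hR1 d_ge0 d_le => A1_le R1_le d0 d14.
  have d2_le : d^+2 <= d / 4 by rewrite expr2; nra.
  have : d^+2 * Z1 <= d / 4 * Z1 by rewrite ler_pM2r.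
  nra.
have n34 := ler_pM (normr_ge0 _) (normr_ge0 _) n3 n4.
rewrite /num; apply: le_trans (ler_normB _ _) _; apply: le_trans (lerD (ler_normB _ _) (lexx _)) _.
have -> : 7 * d^+2 * Z1^+3 = 2 * d^+2 * Z1^+3 + 2 * d^+2 * Z1^+3
  + (2 * d * Z1^+2) * (3/2 * d * Z1) by field.
by rewrite (normrM _ (A1 + R1)); apply: lerD; first exact: lerD.
Qed.

Lemma quotient_linearization_le :
  `|(Zx + Ax + Rx) / N - Zx / Z1 - (Ax / Zx - A1 / Z1) * (Zx / Z1)| <= 14 * d^+2.
Proof.
have N_ge := perturbed_total_ge.
have N_gt0 : 0 < N by apply: lt_le_trans N_ge; rewrite divr_gt0.
have den_gt0 : 0 < Z1^+2 * N by rewrite mulr_gt0 ?exprn_gt0.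
rewrite linearization_errorE normrM normfV (gtr0_norm den_gt0) ler_pdivrMr//.
apply: le_trans linearization_numerator_le _.
have : Z1^+3 <= 2 * (Z1^+2 * N).
  have := ler_wpM2l (sqr_ge0 Z1) N_ge.
  have -> : Z1^+3 = 2 * (Z1^+2 * (Z1 / 2)) by field.
  lra.
have : 0 <= 7 * d^+2 by rewrite mulr_ge0 ?sqr_ge0.
nra.
Qed.

End QuotientLinearization.

Section MixtureBounds.
Variable R : realFieldType.

Lemma norm_mix_le (p a b d : R) : 0 <= p <= 1 -> 0 <= d ->
  `|a| <= d * p -> `|b| <= d * (1 - p) ->
  `|a * (1 - p) - p * b| <= 2 * Num.min p (1 - p) * d.
Proof.
move=> /andP[p0 p1] d0 ha hb; have p1' : 0 <= 1 - p by rewrite subr_ge0.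
apply: le_trans (ler_normB _ _) _; rewrite !normrM (ger0_norm p0) (ger0_norm p1').
have : `|a| * (1 - p) <= d * p * (1 - p) by rewrite ler_wpM2r.
have : p * `|b| <= p * (d * (1 - p)) by rewrite ler_wpM2l.
have : p * (1 - p) <= Num.min p (1 - p) by rewrite le_min; apply/andP; split; nra.
move=> /(ler_wpM2r d0) ? ? ?; lra.
Qed.

Lemma dphi_upper_alg (Zx Z1 Ax A1 d : R) : 0 < Zx -> Zx <= Z1 -> 0 <= d ->
  `|Ax| <= d * Zx -> `|A1 - Ax| <= d * (Z1 - Zx) ->
  `|(Ax / Zx - A1 / Z1) * (Zx / Z1)| <= 2 * Num.min (Zx / Z1) (1 - Zx / Z1) * d.
Proof.
move=> Zx_gt0 Zx_le d0 hAx hA1; have Z1_gt0 := lt_le_trans Zx_gt0 Zx_le.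
have -> : (Ax / Zx - A1 / Z1) * (Zx / Z1) =
    Ax / Z1 * (1 - Zx / Z1) - Zx / Z1 * ((A1 - Ax) / Z1).
  by field; rewrite !gt_eqF.
apply: norm_mix_le => //.
- by rewrite ler_pdivrMr// mul1r Zx_le andbT divr_ge0// ltW.
- by rewrite normrM normfV (gtr0_norm Z1_gt0) mulrA ler_pM2r ?invr_gt0.
- rewrite normrM normfV (gtr0_norm Z1_gt0) -[1](divff (lt0r_neq0 Z1_gt0)) -mulrBl.
  by rewrite mulrA ler_pM2r ?invr_gt0.
Qed.

(* For [e = 0] the right-hand side is [x (1 - x) / 2] while [min z (1 - z) <= 2 x (1 - x)];
   the constant [1/8] leaves room for [e <= 1/100]. *)
Lemma mix_ge (x e z a b : R) : 0 < x <= 1 -> 0 <= e <= 1/100 ->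
  (1 - 2 * e) * x <= z <= (1 + 2 * e) * x -> 1 - z <= (1 + 2 * e) * (1 - x) -> z <= 1 ->
  0 <= a <= (1 + 2 * e) * (x ^+ 2 / 2) -> (1 - 2 * e) * ((1 - x ^+ 2) / 2) <= b ->
  (1/8) * Num.min z (1 - z) <= z * b - a * (1 - z).
Proof.
move=> /andP[x0 x1] /andP[e0 e1] /andP[zlo zhi] z1_le z1 /andP[a0 ahi] blo.
have z0 : 0 <= z by apply: le_trans zlo; apply: mulr_ge0; lra.
have zb : (1 - 2 * e) * x * ((1 - 2 * e) * ((1 - x ^+ 2) / 2)) <= z * b.
  apply: ler_pM => //; first by apply: mulr_ge0; lra.
  have : x ^+ 2 <= 1 by rewrite expr_le1// ltW.
  by move=> ?; apply: mulr_ge0; lra.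
have az : a * (1 - z) <= (1 + 2 * e) * (x ^+ 2 / 2) * ((1 + 2 * e) * (1 - x)).
  by apply: ler_pM => //; lra.
have min_le : Num.min z (1 - z) <= 2 * (1 + 2 * e) * (x * (1 - x)).
  rewrite ge_min; have [xh|xh] := lerP x (1/2); apply/orP; [left|right].
    have : 0 <= (1 + 2 * e) * x by apply: mulr_ge0; lra.
    by move=> ?; apply: le_trans zhi _; nra.
  have : 0 <= (1 + 2 * e) * (1 - x) by apply: mulr_ge0; lra.
  by move=> ?; apply: le_trans z1_le _; nra.
have k : (1 + 2 * e) / 2 <= (1 - 2 * e) ^+ 2 * (1 + x) - (1 + 2 * e) ^+ 2 * x by nra.
have xx : 0 <= x * (1 - x) by apply: mulr_ge0; lra.
have := ler_wpM2r xx k.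
have : (1 - 2 * e) * x * ((1 - 2 * e) * ((1 - x ^+ 2) / 2))
    - (1 + 2 * e) * (x ^+ 2 / 2) * ((1 + 2 * e) * (1 - x))
  = ((1 - 2 * e) ^+ 2 * (1 + x) - (1 + 2 * e) ^+ 2 * x) * (x * (1 - x)) / 2 by field.
lra.
Qed.

Lemma dphi_lower_alg (x e Zx Z1 Ax A1 : R) : 0 < x <= 1 -> 0 <= e <= 1/100 -> 0 < Z1 ->
  (1 - 2 * e) * Z1 * x <= Zx <= (1 + 2 * e) * Z1 * x ->
  Z1 - Zx <= (1 + 2 * e) * Z1 * (1 - x) -> Zx <= Z1 ->
  0 <= Ax <= (1 + 2 * e) * Z1 * (x ^+ 2 / 2) ->
  (1 - 2 * e) * Z1 * ((1 - x ^+ 2) / 2) <= A1 - Ax ->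
  (1/8) * Num.min (Zx / Z1) (1 - Zx / Z1) <= `|(Ax / Zx - A1 / Z1) * (Zx / Z1)|.
Proof.
move=> hx he Z1_gt0 /andP[zlo zhi] ztail Zx_le /andP[a0 ahi] blo.
have Zx_gt0 : 0 < Zx.
  by apply: lt_le_trans zlo; move: hx he => /andP[? _] /andP[_ ?]; rewrite !mulr_gt0//; lra.
have -> : (Ax / Zx - A1 / Z1) * (Zx / Z1) =
    - (Zx / Z1 * ((A1 - Ax) / Z1) - Ax / Z1 * (1 - Zx / Z1)).
  by field; rewrite !gt_eqF.
have tailE : 1 - Zx / Z1 = (Z1 - Zx) / Z1 by rewrite -[1](divff (lt0r_neq0 Z1_gt0)) mulrBl.
rewrite normrN; apply: le_trans (ler_norm _); apply: (mix_ge hx he).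
- by rewrite ler_pdivlMr// ler_pdivrMr// -!(mulrAC _ Z1) zlo.
- by rewrite tailE ler_pdivrMr// mulrAC.
- by rewrite ler_pdivrMr// mul1r.
- by rewrite ler_pdivrMr// mulrAC ahi andbT divr_ge0// ltW.
- by rewrite ler_pdivlMr// mulrAC.
Qed.

End MixtureBounds.

Lemma expR_linearization_bound (R : realType) (u : R) : `|u| <= 1/2 ->
  0 <= expR u - 1 - u <= 2 * u ^+ 2.
Proof.
move=> hu; have u_le : u <= 1/2 by move: hu; rewrite ler_norml => /andP[].
have e1 := expR_ge1Dx u; have e2 := expR_ge1Dx (- u); rewrite expRN in e2.
have eu_gt0 := expR_gt0 u.
have : expR u * (1 - u) <= 1 by rewrite -(ler_pM2l eu_gt0) mulfV ?gt_eqF// in e2.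
move=> ?; apply/andP; split; [lra|nra].
Qed.

Section Perturbation.
Variables (R : realType) (eta : R -> R).
Hypothesis ceta : cont01 eta.
Implicit Types (D : R -> R) (d y : R).

Local Notation g := (expint eta).
Local Notation Z y := (integ 0 y (expint eta)).

Definition dZ D y := integ 0 y (fun s => integ 0 s D * g s).

Definition remZ D y := integ 0 y (fun s => g s * (expR (integ 0 s D) - 1 - integ 0 s D)).

Lemma cont01_expint : cont01 g.
Proof. exact: cont01_comp (@continuous_expR R) (cont01_integ ceta). Qed.

Lemma expint_gt0 s : 0 < g s.
Proof. exact: expR_gt0. Qed.

Lemma integ_expint_ge0 y : 0 <= Z y.
Proof. by apply: integ_ge0 => t _ _; exact/ltW/expint_gt0. Qed.

Lemma integ_expint_le1 y : 0 <= y -> y <= 1 -> Z y <= Z 1.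
Proof.
by move=> y0 y1; apply: integ_le_integ1 cont01_expint y0 y1 _ => t _ _; exact/ltW/expint_gt0.
Qed.

Lemma integ_expint1_gt0 : 0 < Z 1.
Proof.
have [c _ cmin] := EVT_min ler01 cont01_expint.
have gc_le : integ 0 1 (fun _ => g c) <= Z 1.
  apply: le_integ ler01 (lexx 1) _; [exact: cont01_cst|exact: cont01_expint|].
  by move=> t t0 t1; apply: cmin; rewrite in_itv /= t0 t1.
apply: lt_le_trans (expint_gt0 c) (le_trans _ gc_le).
by rewrite integ_cst ?ler01// mulr1.
Qed.

Lemma cont01_dZ_integrand D : cont01 D -> cont01 (fun s => integ 0 s D * g s).
Proof. by move=> cD; apply: cont01M; [exact: cont01_integ|exact: cont01_expint]. Qed.

Lemma dZ_linear (a : R) D1 D2 y : cont01 D1 -> cont01 D2 -> 0 <= y -> y <= 1 ->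
  dZ (fun t => a * D1 t + D2 t) y = a * dZ D1 y + dZ D2 y.
Proof.
move=> c1 c2 y0 y1; have cF1 := cont01_dZ_integrand c1; have cF2 := cont01_dZ_integrand c2.
rewrite /dZ -(integZ cF1 y0 y1) -(integD (@cont01Z _ a _ cF1) cF2 y0 y1).
apply: eq_integ => t t0 ty; have t1 := le_trans ty y1.
by rewrite integD ?integZ//; [ring|exact: cont01Z].
Qed.

Lemma norm_dZ_integrand_le D d t : cont01 D ->
  (forall t, 0 <= t -> t <= 1 -> `|D t| <= d) -> 0 <= t -> t <= 1 ->
  `|integ 0 t D * g t| <= d * g t.
Proof.
move=> cD hD t0 t1; rewrite normrM (gtr0_norm (expint_gt0 _)).
by apply: ler_wpM2r; [exact/ltW/expint_gt0|exact: norm_integ_le_sup].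
Qed.

Lemma norm_dZ_le D d y : cont01 D -> (forall t, 0 <= t -> t <= 1 -> `|D t| <= d) ->
  0 <= y -> y <= 1 -> `|dZ D y| <= d * Z y.
Proof.
move=> cD hD y0 y1; rewrite -(integZ cont01_expint y0 y1).
apply: (norm_integ_le _ _ y0 y1); [exact: cont01_dZ_integrand|exact/cont01Z/cont01_expint|].
by move=> t t0 ty; apply: norm_dZ_integrand_le => //; exact: le_trans y1.
Qed.

Lemma norm_dZ_tail_le D d y : cont01 D -> (forall t, 0 <= t -> t <= 1 -> `|D t| <= d) ->
  0 <= y -> y <= 1 -> `|dZ D 1 - dZ D y| <= d * (Z 1 - Z y).
Proof.
move=> cD hD y0 y1; have cF := cont01_dZ_integrand cD.
have hF t : 0 <= t -> t <= 1 -> `|integ 0 t D * g t| <= d * g t.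
  exact: norm_dZ_integrand_le.
have up : dZ D 1 - dZ D y <= d * Z 1 - d * Z y.
  rewrite /dZ -!(integZ cont01_expint) ?ler01//.
  apply: integ_tail_le => //; first exact: cont01Z cont01_expint.
  by move=> t t0 t1; exact: ler_normlW (hF t t0 t1).
have lo : - d * Z 1 - (- d * Z y) <= dZ D 1 - dZ D y.
  rewrite /dZ -!(integZ cont01_expint) ?ler01//.
  apply: integ_tail_le => //; first exact: cont01Z cont01_expint.
  by move=> t t0 t1; rewrite mulNr; exact: lerNnormlW (hF t t0 t1).
by rewrite ler_norml; apply/andP; split; lra.
Qed.

Lemma cont01_remZ_integrand D : cont01 D ->
  cont01 (fun s => g s * (expR (integ 0 s D) - 1 - integ 0 s D)).
Proof.
move=> cD; have cF := cont01_integ cD.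
apply: cont01M; first exact: cont01_expint.
apply: cont01B => //; apply: cont01B; last exact: cont01_cst.
exact: cont01_comp (@continuous_expR R) cF.
Qed.

Lemma integ_expint_perturb D y : cont01 D -> 0 <= y -> y <= 1 ->
  integ 0 y (expint (fun t => eta t + D t)) = Z y + dZ D y + remZ D y.
Proof.
move=> cD y0 y1; have cF := cont01_dZ_integrand cD; have cR := cont01_remZ_integrand cD.
rewrite /dZ /remZ -(integD cont01_expint cF y0 y1) -(integD (cont01D cont01_expint cF) cR y0 y1).
apply: eq_integ => t t0 ty.
by rewrite /expint integD ?(le_trans ty y1)// expRD; ring.
Qed.

Lemma norm_remZ_le D d y : cont01 D -> (forall t, 0 <= t -> t <= 1 -> `|D t| <= d) ->
  d <= 1/2 -> 0 <= y -> y <= 1 -> `|remZ D y| <= 2 * d^+2 * Z y.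
Proof.
move=> cD hD d_le y0 y1; rewrite -(integZ cont01_expint y0 y1).
apply: (norm_integ_le _ _ y0 y1); [exact: cont01_remZ_integrand|exact/cont01Z/cont01_expint|].
move=> t t0 ty; have hF := norm_integ_le_sup cD hD t0 (le_trans ty y1).
have /andP[r0 r2] := expR_linearization_bound (le_trans hF d_le).
rewrite normrM (gtr0_norm (expint_gt0 _)) (ger0_norm r0) mulrC.
apply: ler_wpM2r; first exact/ltW/expint_gt0.
apply: le_trans r2 _; rewrite ler_pM2l//.
by move: hF; rewrite ler_norml => /andP[? ?]; nra.
Qed.

Lemma dphiE x D : dphi eta x D = (dZ D x / Z x - dZ D 1 / Z 1) * phi eta x.
Proof. by []. Qed.

Lemma phi_ge0 x : 0 <= phi eta x.
Proof. by rewrite divr_ge0 ?integ_expint_ge0. Qed.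

Lemma phi_le1 x : 0 <= x -> x <= 1 -> phi eta x <= 1.
Proof. by move=> x0 x1; rewrite ler_pdivrMr ?integ_expint1_gt0// mul1r integ_expint_le1. Qed.

Lemma dphi_linear x (a : R) D1 D2 : 0 <= x -> x <= 1 -> cont01 D1 -> cont01 D2 ->
  dphi eta x (fun t => a * D1 t + D2 t) = a * dphi eta x D1 + dphi eta x D2.
Proof.
move=> x0 x1 c1 c2.
have lin (u v u' v' s s' p : R) : ((a * u + v) / s - (a * u' + v') / s') * p =
    a * ((u / s - u' / s') * p) + (v / s - v' / s') * p by ring.
by rewrite !dphiE (dZ_linear a c1 c2 x0 x1) (dZ_linear a c1 c2 ler01 (lexx 1)); exact: lin.
Qed.

Lemma norm_dphi_le x D : 0 <= x -> x <= 1 -> cont01 D ->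
  `|dphi eta x D| <= 2 * Num.min (phi eta x) (1 - phi eta x) * supnorm01 D.
Proof.
move=> x0 x1 cD; have hD t := @norm_le_supnorm01 _ D t cD.
(* [Z x = 0] only for [x = 0], where [dphi] vanishes by the convention [u / 0 = 0]. *)
have [Zx0|Zx_neq0] := eqVneq (Z x) 0.
  rewrite dphiE /phi Zx0 !mul0r mulr0 normr0.
  by rewrite mulr_ge0 ?supnorm01_ge0// mulr_ge0// le_min lexx ler01.
apply: dphi_upper_alg _ _ (supnorm01_ge0 cD) (norm_dZ_le cD hD x0 x1)
  (norm_dZ_tail_le cD hD x0 x1).
- by rewrite lt_neqAle eq_sym Zx_neq0 integ_expint_ge0.
- exact: integ_expint_le1.
Qed.

Lemma dphi_frechet x e : 0 <= x -> x <= 1 -> 0 < e -> exists2 d, 0 < d &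
  forall D, cont01 D -> supnorm01 D < d ->
    `|phi (fun t => eta t + D t) x - phi eta x - dphi eta x D| <= e * supnorm01 D.
Proof.
move=> x0 x1 e0; exists (Num.min (1/4) (e / 14)).
  by rewrite lt_min; apply/andP; split; [lra|rewrite divr_gt0].
move=> D cD; rewrite lt_min => /andP[D_lt D_lte].
have hD t := @norm_le_supnorm01 _ D t cD; have D0 := supnorm01_ge0 cD.
have D_le2 : supnorm01 D <= 1/2 by lra.
rewrite dphiE /phi (integ_expint_perturb cD x0 x1) (integ_expint_perturb cD ler01 (lexx 1)).
apply: le_trans (quotient_linearization_le (integ_expint_ge0 x) (integ_expint_le1 x0 x1)
  integ_expint1_gt0 D0 (ltW D_lt) (norm_dZ_le cD hD x0 x1) (norm_dZ_le cD hD ler01 (lexx 1))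
  (norm_remZ_le cD hD D_le2 x0 x1) (norm_remZ_le cD hD D_le2 ler01 (lexx 1))) _.
have : supnorm01 D * 14 < e by rewrite -ltr_pdivlMr.
by rewrite expr2 mulrA ler_wpM2r //; lra.
Qed.

Lemma dZ_cst1 y : 0 <= y -> y <= 1 -> dZ (fun _ => 1) y = integ 0 y (fun s => s * g s).
Proof. by move=> y0 y1; apply: eq_integ => t t0 ty; rewrite integ_cst// mul1r. Qed.

End Perturbation.

Section SmallNonlinearity.
Variables (R : realType) (eta : R -> R) (eps : R).
Hypotheses (ceta : cont01 eta) (eps_gt0 : 0 < eps) (D2phi_lt : D2norm01 (phi eta) < eps).

Local Notation g := (expint eta).
Local Notation Z y := (integ 0 y (expint eta)).
Local Notation Z1_gt0 := (integ_expint1_gt0 ceta).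

Lemma is_derive_expint (t : R) : 0 < t -> t < 1 -> is_derive t (1 : R) g (g t * eta t).
Proof.
by move=> t0 t1; exact: is_derive1_comp (is_derive_expR _) (is_derive_integ ceta t0 t1).
Qed.

Lemma derive1_phi (t : R) : 0 < t -> t < 1 -> derive1 (phi eta) t = g t / Z 1.
Proof.
move=> t0 t1; have [Z_ex Zt] := is_derive_integ (cont01_expint ceta) t0 t1.
by rewrite /phi derive1Mr// derive1E Zt.
Qed.

Lemma derive2_phi (t : R) : 0 < t -> t < 1 -> derive1 (derive1 (phi eta)) t = g t * eta t / Z 1.
Proof.
move=> t0 t1; rewrite derive1E (@near_eq_derive _ _ _ _ (fun y => g y / Z 1)); last first.
  have : t \in `]0, 1[ by rewrite in_itv /= t0 t1.
  move/(@near_in_itvoo R 0 1); apply: filterS => y; rewrite in_itv /= => /andP[y0 y1].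
  exact: derive1_phi.
have [g_ex gt] := is_derive_expint t0 t1.
by rewrite -derive1E derive1Mr// derive1E gt.
Qed.

Lemma norm_expint_eta_le c : 0 < c -> c < 1 -> `|g c * eta c| <= eps * Z 1.
Proof.
move=> c0 c1; have Z1p := Z1_gt0.
have [M hM] := cont01_bounded (cont01M (cont01_expint ceta) ceta).
have D2_ub : has_ubound [set `|derive1 (derive1 (phi eta)) t| | t in `]0 : R, 1[].
  exists (M / Z 1) => _ [t /= + <-]; rewrite in_itv /= => /andP[t0 t1].
  rewrite derive2_phi// normrM normfV (gtr0_norm Z1_gt0) ler_pM2r ?invr_gt0//.
  by apply: hM; exact: ltW.
have : `|derive1 (derive1 (phi eta)) c| <= D2norm01 (phi eta).
  by apply: (@ub_le_sup R _ D2_ub); exists c => //=; rewrite in_itv /= c0 c1.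
rewrite derive2_phi// normrM normfV (gtr0_norm Z1_gt0) => /le_lt_trans/(_ D2phi_lt).
by rewrite ltr_pdivrMr// => /ltW.
Qed.

Lemma norm_expint_sub0_le t : 0 <= t -> t <= 1 -> `|g t - g 0| <= eps * Z 1.
Proof.
have epsZ1_ge0 : 0 <= eps * Z 1 by rewrite mulr_ge0 ?ltW ?Z1_gt0.
rewrite le_eqVlt => /predU1P[<-|t0] t1; first by rewrite subrr normr0.
have dg c : c \in `]0, t[ -> is_derive c 1 g (g c * eta c).
  by rewrite in_itv /= => /andP[c0 ct]; apply: is_derive_expint => //; exact: lt_le_trans t1.
have [c + ->] := MVT t0 dg (cont01_subitv (cont01_expint ceta) (ltW t0) t1).
rewrite in_itv /= => /andP[c0 ct]; rewrite subr0 normrM (gtr0_norm t0).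
apply: le_trans (ler_wpM2r (ltW t0) (norm_expint_eta_le c0 (lt_le_trans ct t1))) _.
by rewrite ler_piMr.
Qed.

Lemma expint_bounds t : 0 <= t -> t <= 1 ->
  (1 - 2 * eps) * Z 1 <= g t <= (1 + 2 * eps) * Z 1.
Proof.
move=> t0 t1; have cg := cont01_expint ceta.
have near0 s : 0 <= s -> s <= 1 -> g 0 - eps * Z 1 <= g s <= g 0 + eps * Z 1.
  by move=> s0 s1; rewrite -ler_distl; exact: norm_expint_sub0_le.
(* [Z 1] is the mean of [g] on [0, 1], so it is also within [eps * Z 1] of [g 0]. *)
have lo : (g 0 - eps * Z 1) * 1 <= Z 1.
  by apply: (integ_ge_cst cg) => // s s0 s1; case/andP: (near0 s s0 s1).
have hi : Z 1 <= (g 0 + eps * Z 1) * 1.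
  by apply: (integ_le_cst cg) => // s s0 s1; case/andP: (near0 s s0 s1).
have /andP[lo_t hi_t] := near0 t t0 t1.
move: lo hi lo_t hi_t; move: (g 0) (g t) (Z 1) => g0 gt z1 *.
by apply/andP; split; lra.
Qed.

Lemma dphi_cst1_ge x : eps <= 1/100 -> 0 <= x -> x <= 1 ->
  (1/8) * Num.min (phi eta x) (1 - phi eta x) <= `|dphi eta x (fun _ => 1)|.
Proof.
move=> eps_le; rewrite le_eqVlt => /predU1P[<-|x_gt0] x1.
  rewrite /phi integ00 mul0r subr0 (_ : Num.min 0 1 = 0) ?mulr0//.
  by apply/min_idPl; exact: ler01.
have x0 := ltW x_gt0; have cg := cont01_expint ceta.
have g_lo t : 0 <= t -> t <= 1 -> (1 - 2 * eps) * Z 1 <= g t.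
  by move=> t0 t1; case/andP: (expint_bounds t0 t1).
have g_hi t : 0 <= t -> t <= 1 -> g t <= (1 + 2 * eps) * Z 1.
  by move=> t0 t1; case/andP: (expint_bounds t0 t1).
rewrite dphiE /phi !dZ_cst1 ?ler01//.
apply: (@dphi_lower_alg _ x eps).
- by rewrite x_gt0 x1.
- by rewrite ltW.
- exact: integ_expint1_gt0.
- apply/andP; split; [apply: (integ_ge_cst cg)|apply: (integ_le_cst cg)] => // t t0 tx.
    by apply: g_lo => //; exact: le_trans x1.
  by apply: g_hi => //; exact: le_trans x1.
- exact: integ_tail_le_cst cg x0 x1 g_hi.
- exact: integ_expint_le1.
- apply/andP; split.
    by apply: integ_ge0 => t t0 _; rewrite mulr_ge0// ltW// expint_gt0.
  by apply: (integ_id_mul_le cg) => // t t0 tx; apply: g_hi => //; exact: le_trans x1.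
- exact: integ_id_mul_tail_ge cg x0 x1 g_lo.
Qed.

End SmallNonlinearity.

Section OperatorNorm01.
Variable R : realType.
Implicit Types (L : (R -> R) -> R) (B : R).

Lemma opnorm01_le L B : (forall D, cont01 D -> supnorm01 D <= 1 -> `|L D| <= B) ->
  opnorm01 L <= B.
Proof.
move=> LB; apply: ge_sup; last by move=> _ [D [cD D1] <-]; exact: LB.
exists `|L (fun _ => 0)|, (fun _ => 0) => //; split; first exact: cont01_cst.
by apply: le_trans (supnorm01_cst_le 0) _; rewrite normr0.
Qed.

Lemma le_opnorm01 L B D : (forall D, cont01 D -> supnorm01 D <= 1 -> `|L D| <= B) ->
  cont01 D -> supnorm01 D <= 1 -> `|L D| <= opnorm01 L.
Proof.
move=> LB cD D1; apply: ub_le_sup; last by exists D.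
by exists B => _ [D' [cD' D'1] <-]; exact: LB.
Qed.

End OperatorNorm01.

Unset Implicit Arguments.

Theorem mainTheorem5 (R : realType) (x : R) (hx0 : 0 <= x) (hx1 : x <= 1) :
  (forall eta : R -> R, cont01 eta ->
     (* dphi eta x is a linear functional on C^0([0,1]) ... *)
     (forall (a : R) (D1 D2 : R -> R), cont01 D1 -> cont01 D2 ->
        dphi eta x (fun t => a * D1 t + D2 t) = a * dphi eta x D1 + dphi eta x D2) /\
     (* ... which is bounded ... *)
     (exists C : R, forall D : R -> R, cont01 D ->
        `|dphi eta x D| <= C * supnorm01 D) /\
     (* ... and is the Frechet derivative of E at eta *)
     (forall e : R, 0 < e -> exists d : R, 0 < d /\
        forall D : R -> R, cont01 D -> supnorm01 D < d ->
          `|phi (fun t => eta t + D t) x - phi eta x - dphi eta x D|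
            <= e * supnorm01 D)) /\
  (exists eps0 : R, 0 < eps0 /\
     forall eps : R, 0 < eps -> eps < eps0 ->
     forall eta : R -> R, cont01 eta ->
       D2norm01 (phi eta) < eps ->
       (1 / 8) * Num.min (phi eta x) (1 - phi eta x) <= opnorm01 (dphi eta x) /\
       opnorm01 (dphi eta x) <= 2 * Num.min (phi eta x) (1 - phi eta x)).
Proof.
split=> [eta ceta|].
  split; first by move=> a D1 D2; exact: dphi_linear.
  split; first by eexists => D; exact: norm_dphi_le.
  by move=> e e0; have [d d0 hd] := dphi_frechet ceta hx0 hx1 e0; exists d.
exists (1/100); split=> [|eps eps0 eps_lt eta ceta D2phi_lt]; first lra.
have min_ge0 : 0 <= Num.min (phi eta x) (1 - phi eta x).
  by rewrite le_min phi_ge0 subr_ge0 phi_le1.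
have upper D : cont01 D -> supnorm01 D <= 1 ->
    `|dphi eta x D| <= 2 * Num.min (phi eta x) (1 - phi eta x).
  move=> cD D1; apply: le_trans (norm_dphi_le ceta hx0 hx1 cD) _.
  by rewrite ler_piMr ?mulr_ge0.
split; last exact: opnorm01_le.
apply: le_trans (dphi_cst1_ge ceta eps0 D2phi_lt (ltW eps_lt) hx0 hx1) _.
apply: le_opnorm01 upper _ _; first exact: cont01_cst.
by rewrite (le_trans (supnorm01_cst_le 1)) ?normr1.
Qed.
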